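(* Let $G$ be a graph on $n$ vertices with at least one edge. Then \[ \lambda(G)\le \frac{-|E(G)|}{\binom{\chi(G)}{2}\,\theta(G)}. \]
   Context: All graphs are finite and simple; $\lambda(G)$ denotes the smallest eigenvalue of the adjacency matrix of $G$. $\chi(G)$ is the chromatic number and $\alpha(G)$ the independence number of $G$. For a graph $G$ on $n$ vertices, $\theta(G)=\min\{n/2,\ \alpha(G)\}$. *)

From HB Require Import structures.
From mathcomp Require Import all_boot all_order all_algebra.
From mathcomp Require Import reals.
Set Implicit Arguments. Unset Strict Implicit. Unset Printing Implicit Defensive.
Import Order.TTheory GRing.Theory Num.Theory.
Local Open Scope ring_scope.

Definition simple_graph (n : nat) (e : rel 'I_n) : Prop :=
  irreflexive e /\ symmetric e.

Definition adj_mx (R : realType) (n : nat) (e : rel 'I_n) : 'M[R]_n :=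
  \matrix_(i, j) (e i j)%:R.

Definition is_smallest_eigenvalue (R : realType) (n : nat) (A : 'M[R]_n) (mu : R) : Prop :=
  eigenvalue A mu /\ (forall nu, eigenvalue A nu -> mu <= nu).

Definition num_edges (n : nat) (e : rel 'I_n) : nat :=
  #|[set p : 'I_n * 'I_n | (p.1 < p.2)%N && e p.1 p.2]|.

Definition colorable (n : nat) (e : rel 'I_n) (k : nat) : bool :=
  [exists f : {ffun 'I_n -> 'I_k}, [forall x, forall y, e x y ==> (f x != f y)]].

(* chromatic number: least k (searched in 0..n, which suffices for loopless
   graphs since the identity colouring uses n colours) admitting a proper
   k-colouring. *)
Definition chromatic_number (n : nat) (e : rel 'I_n) : nat :=
  find (colorable e) (iota 0 n.+1).

Definition independent (n : nat) (e : rel 'I_n) (A : {set 'I_n}) : bool :=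
  [forall x in A, forall y in A, ~~ e x y].

Definition independence_number (n : nat) (e : rel 'I_n) : nat :=
  \max_(A : {set 'I_n} | independent e A) #|A|.

Definition theta (R : realType) (n : nat) (e : rel 'I_n) : R :=
  Num.min (n%:R / 2) (independence_number e)%:R.

From HB Require Import structures.
From mathcomp Require Import all_boot all_order all_algebra.
From mathcomp Require Import reals.
From mathcomp Require Import complex spectral sesquilinear.
From mathcomp Require Import lra.
Import Order.TTheory GRing.Theory Num.Theory.
Local Open Scope ring_scope.

(* Colour G properly with chi(G) colours.  For two colour classes C and D, the
   Rayleigh quotient of the adjacency matrix at the vector 1_C - 1_D gives
   lambda(G) (|C| + |D|) <= -2 e(C, D), since there are no edges inside a class.
   Each class is independent and the two are disjoint, so |C| + |D| <= 2 theta(G);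
   as lambda(G) <= 0, summing over the pairs of classes yields
   lambda(G) binom(chi(G), 2) theta(G) <= -|E(G)|. *)

Lemma normalmx_rayleigh {C : numClosedFieldType} {n} {A : 'M[C]_n} {m : C}
    (y : 'rV[C]_n) :
  A \is normalmx -> (forall i, m <= spectral_diag A 0 i) ->
  m * (y *m y^t*)%sesqui 0 0 <= (y *m A *m y^t*)%sesqui 0 0.
Proof.
move=> /orthomx_spectralP + m_le; set P := spectralmx A; set d := spectral_diag A.
have PU : P \is unitarymx := spectral_unitarymx A.
rewrite invmx_unitary // => ->; set z := y *m (P^t*)%sesqui.
have zT : (z^t*)%sesqui = P *m (y^t*)%sesqui by rewrite trmx_mul map_mxM trmxCK.
have PtP : (P^t*)%sesqui *m P = 1%:M.
  by rewrite -invmx_unitary // mulVmx // spectral_unit.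
have -> : (y *m y^t*)%sesqui = (z *m z^t*)%sesqui.
  by rewrite zT mulmxA -(mulmxA y) PtP mulmx1.
rewrite !mulmxA -/z -mulmxA -zT mul_mx_diag !mxE mulr_sumr.
apply: ler_sum => j _; rewrite !mxE mulrC [leRHS]mulrAC.
by rewrite ler_wpM2l ?m_le // mul_conjC_ge0.
Qed.

Lemma spectral_diag_eigenvalue {C : numClosedFieldType} {n} (A : 'M[C]_n) i :
  A \is normalmx -> eigenvalue A (spectral_diag A 0 i).
Proof.
move=> /orthomx_spectralP; set P := spectralmx A; set d := spectral_diag A => AE.
have PA : P *m A = diag_mx d *m P by rewrite {1}AE !mulmxA mulmxV ?mul1mx ?spectral_unit.
apply/eigenvalueP; exists (row i P).
  by rewrite -row_mul PA; apply/rowP => j; rewrite mul_diag_mx !mxE.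
apply: contraNneq (oner_neq0 C) => /(congr1 (fun v => (v *m (P^t*)%sesqui) 0 i)).
rewrite -row_mul mul0mx; move/unitarymxP: (spectral_unitarymx A) => ->.
by rewrite !mxE eqxx => /eqP.
Qed.

Section RealSymmetric.
Context {R : rcfType}.
Local Notation toC := (real_complex R).

Lemma eigenvalue_map_realC {n} (A : 'M[R]_n) (r : R) :
  eigenvalue (map_mx toC A) r%:C%C -> eigenvalue A r.
Proof. by rewrite !eigenvalue_root_char -map_char_poly fmorph_root. Qed.

Lemma map_realC_trC {m n} (M : 'M[R]_(m, n)) : (map_mx toC M ^t*)%sesqui = map_mx toC M^T.
Proof. by apply/matrixP => i j; rewrite !mxE; exact: conjc_real. Qed.

Lemma sym_realC_hermsymmx {n} (A : 'M[R]_n) : A^T = A -> map_mx toC A \is hermsymmx.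
Proof. by move=> symA; apply/is_hermitianmxP; rewrite expr0 scale1r map_realC_trC symA. Qed.

Lemma symmetric_rayleigh {n} {A : 'M[R]_n} {mu : R} (x : 'rV[R]_n) :
  A^T = A -> (forall nu, eigenvalue A nu -> mu <= nu) ->
  mu * (x *m x^T) 0 0 <= (x *m A *m x^T) 0 0.
Proof.
move=> /sym_realC_hermsymmx AcH mu_min; set Ac := map_mx toC A in AcH.
have mu_le i : mu%:C%C <= spectral_diag Ac 0 i.
  have /complex_realP [r dr] := mxOverP (hermitian_spectral_diag_real AcH) 0 i.
  rewrite dr lecR; apply: mu_min; apply: eigenvalue_map_realC; rewrite -dr.
  exact/spectral_diag_eigenvalue/hermitian_normalmx.
have := normalmx_rayleigh (map_mx toC x) (hermitian_normalmx AcH) mu_le.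
rewrite map_realC_trC -!map_mxM [in X in _ * X]mxE [in X in _ <= X]mxE.
by rewrite -rmorphM lecR.
Qed.

Lemma min_eigenvalue_le_diag {n} (A : 'M[R]_n) (mu : R) i :
  A^T = A -> (forall nu, eigenvalue A nu -> mu <= nu) -> mu <= A i i.
Proof.
move=> symA mu_min; have := symmetric_rayleigh (delta_mx 0 i) symA mu_min.
by rewrite trmx_delta -!rowE -colE !mxE !eqxx mulr1.
Qed.

End RealSymmetric.

Lemma mx_bilin_formE {R : comNzRingType} {n} (M : 'M[R]_n) (x y : 'rV[R]_n) :
  (x *m M *m y^T) 0 0 = \sum_i \sum_j x 0 i * M i j * y 0 j.
Proof.
rewrite mxE; under eq_bigr => j _ do rewrite !mxE big_distrl /=.
by rewrite exchange_big.
Qed.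

Lemma mx_dot_formE {R : comNzRingType} {n} (x y : 'rV[R]_n) :
  (x *m y^T) 0 0 = \sum_i x 0 i * y 0 i.
Proof. by rewrite mxE; apply: eq_bigr => i _; rewrite !mxE. Qed.

Lemma colorableP {n} (e : rel 'I_n) k :
  reflect (exists f : 'I_n -> 'I_k, forall x y, e x y -> f x != f y)
          (colorable e k).
Proof.
apply: (iffP existsP) => [[f /forallP f_proper] | [f f_proper]].
  by exists f => x y; move/forallP: (f_proper x) => /(_ y) /implyP.
exists [ffun x => f x]; apply/forallP => x; apply/forallP => y.
by apply/implyP; rewrite !ffunE; apply: f_proper.
Qed.

Lemma colorable_chromatic_number {n} {e : rel 'I_n} :
  irreflexive e -> colorable e (chromatic_number e).
Proof.
move=> e_irr; have has_col : has (colorable e) (iota 0 n.+1).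
  apply/hasP; exists n; first by rewrite mem_iota ltnSn.
  by apply/colorableP; exists id => x y exy; apply/eqP => xy; rewrite xy e_irr in exy.
have := nth_find 0 has_col; rewrite nth_iota ?add0n //.
by move: has_col; rewrite has_find size_iota.
Qed.

Section Adjacency.
Variable R : realType.
Context {n : nat} {e : rel 'I_n}.
Local Notation A := (adj_mx R e).

Lemma adj_mx_tr : symmetric e -> A^T = A.
Proof. by move=> e_sym; apply/matrixP => i j; rewrite !mxE e_sym. Qed.

Lemma adj_mx_diag i : irreflexive e -> A i i = 0.
Proof. by move=> e_irr; rewrite mxE e_irr. Qed.

Lemma sum_adj_mx : irreflexive e -> symmetric e ->
  \sum_i \sum_j A i j = 2 * (num_edges e)%:R.
Proof.
move=> e_irr e_sym.
have edgesE : (num_edges e)%:R = \sum_(i : 'I_n) \sum_(j : 'I_n) (((i < j)%N && e i j)%:R : R).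
  rewrite /num_edges -sum1_card natr_sum big_mkcond pair_big /=.
  by apply: eq_bigr => -[i j] _; rewrite inE; case: (_ && _).
have edgesE' : (num_edges e)%:R = \sum_(i : 'I_n) \sum_(j : 'I_n) (((j < i)%N && e i j)%:R : R).
  by rewrite edgesE exchange_big; apply: eq_bigr => i _; apply: eq_bigr => j _; rewrite e_sym.
rewrite mulr2n mulrDl mul1r {1}edgesE edgesE' -big_split; apply: eq_bigr => i _.
rewrite -big_split; apply: eq_bigr => j _; rewrite mxE.
by case: (ltngtP i j) => [_|_|/val_inj ->] /=; rewrite ?e_irr ?addr0 ?add0r.
Qed.

End Adjacency.

Section ColourClasses.
Context {R : realType} {n : nat} {e : rel 'I_n} {k : nat} {f : 'I_n -> 'I_k}.
Hypothesis e_irr : irreflexive e.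
Hypothesis e_sym : symmetric e.
Hypothesis f_proper : forall x y, e x y -> f x != f y.
Local Notation A := (adj_mx R e).

Definition colour_class (c : 'I_k) : {set 'I_n} := [set i | f i == c].

Definition colour_ind (c : 'I_k) : 'rV[R]_n := \row_i (f i == c)%:R.

Definition cross_edges (c d : 'I_k) : R := (colour_ind c *m A *m (colour_ind d)^T) 0 0.

Lemma colour_class_independent c : independent e (colour_class c).
Proof.
apply/forall_inP => x; rewrite inE => /eqP fx; apply/forall_inP => y.
by rewrite inE => /eqP fy; apply/negP => /f_proper; rewrite fx fy eqxx.
Qed.

Lemma card_colour_class_le c : (#|colour_class c| <= independence_number e)%N.
Proof.
rewrite /independence_number.
exact: (leq_bigmax_cond (F := fun B : {set 'I_n} => #|B|)) (colour_class_independent c).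
Qed.

Lemma card_colour_classes_le c d : c != d -> (#|colour_class c| + #|colour_class d| <= n)%N.
Proof.
move=> cd; rewrite -cardsUI (_ : _ :&: _ = set0) ?cards0 ?addn0.
  by rewrite -[leqRHS]card_ord max_card.
apply/setP => i; rewrite !inE; apply: contraNF cd => /andP[/eqP <- /eqP <-] //.
Qed.

Lemma card_colour_classes_le_theta c d : c != d ->
  (#|colour_class c| + #|colour_class d|)%:R <= 2 * theta R e.
Proof.
move=> cd; have := card_colour_classes_le c d cd; rewrite -(ler_nat R) natrD.
have := card_colour_class_le c; have := card_colour_class_le d; rewrite -!(ler_nat R).
rewrite /theta -ler_pdivrMl ?ltr0n // le_min => *; apply/andP; split; lra.
Qed.

Lemma colour_ind_dot c d :
  (colour_ind c *m (colour_ind d)^T) 0 0 = (c == d)%:R * #|colour_class c|%:R.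
Proof.
rewrite mx_dot_formE -sum1_card natr_sum mulr_sumr [RHS]big_mkcond /=.
apply: eq_bigr => i _; rewrite !mxE inE.
by case: (f i =P c) => [->|_]; rewrite ?eqxx ?mul1r ?mulr1 ?mul0r.
Qed.

Lemma cross_edges_same c : cross_edges c c = 0.
Proof.
rewrite /cross_edges mx_bilin_formE big1 // => i _; rewrite big1 // => j _.
rewrite !mxE; case e_ij: (e i j); last by rewrite mulr0 mul0r.
have := f_proper i j e_ij.
by case: (f i =P c) => [->|_]; case: (f j =P c) => [->|_]; rewrite ?eqxx ?mul0r ?mulr0.
Qed.

Lemma cross_edges_sym c d : cross_edges c d = cross_edges d c.
Proof.
have entry_tr (M : 'M[R]_1) : M 0 0 = M^T 0 0 by rewrite mxE.
by rewrite /cross_edges entry_tr !trmx_mul trmxK adj_mx_tr // mulmxA.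
Qed.

Lemma sum_colour_ind : \sum_c colour_ind c = const_mx 1.
Proof.
apply/rowP => i; rewrite summxE !mxE (bigD1 (f i)) //= mxE eqxx big1 ?addr0 //.
by move=> c /negbTE; rewrite mxE eq_sym => ->.
Qed.

Lemma sum_cross_edges : \sum_c \sum_d cross_edges c d = 2 * (num_edges e)%:R.
Proof.
have -> : \sum_c \sum_d cross_edges c d =
    ((\sum_c colour_ind c) *m A *m (\sum_d colour_ind d)^T) 0 0.
  rewrite linear_sum /= mulmx_sumr summxE exchange_big /=; apply: eq_bigr => d _.
  by rewrite !mulmx_suml summxE.
rewrite sum_colour_ind mx_bilin_formE -sum_adj_mx //.
by apply: eq_bigr => i _; apply: eq_bigr => j _; rewrite !mxE mul1r mulr1.
Qed.

Context {mu : R}.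
Hypothesis mu_min : forall nu, eigenvalue A nu -> mu <= nu.

Lemma colour_pair_bound c d : c != d ->
  mu * (#|colour_class c| + #|colour_class d|)%:R <= - (2 * cross_edges c d).
Proof.
move=> cd; have := symmetric_rayleigh (colour_ind c - colour_ind d) (adj_mx_tr R e_sym) mu_min.
have entryD (M N : 'M[R]_1) : (M + N) 0 0 = M 0 0 + N 0 0 by rewrite !mxE.
have entryN (M : 'M[R]_1) : (- M) 0 0 = - M 0 0 by rewrite !mxE.
rewrite !(mulmxBl, mulmxBr, linearB) /= !(entryD, entryN) !colour_ind_dot.
have crossE c' d' : (colour_ind c' *m A *m (colour_ind d')^T) 0 0 = cross_edges c' d' by [].
rewrite !crossE !cross_edges_same (cross_edges_sym d c) !eqxx (negbTE cd) eq_sym (negbTE cd).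
rewrite !mul1r !mul0r natrD; lra.
Qed.

Hypothesis mu_le0 : mu <= 0.

Lemma colouring_bound : mu * ('C(k, 2)%:R * theta R e) <= - (num_edges e)%:R.
Proof.
have pair c d : c != d -> mu * theta R e <= - cross_edges c d.
  move=> cd; have := ler_wnM2l mu_le0 (card_colour_classes_le_theta c d cd).
  have := colour_pair_bound c d cd; lra.
have sum_le : \sum_(c : 'I_k) \sum_(d in predC1 c) mu * theta R e <=
              \sum_(c : 'I_k) \sum_(d in predC1 c) - cross_edges c d.
  by apply: ler_sum => c _; apply: ler_sum => d; rewrite inE eq_sym; apply: pair.
have lhsE : \sum_(c : 'I_k) \sum_(d in predC1 c) mu * theta R e = mu * theta R e * (k * k.-1)%:R.
  under eq_bigr => c _ do rewrite sumr_const cardC1 card_ord.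
  by rewrite sumr_const card_ord -mulrnA mulr_natr mulnC.
have rhsE : \sum_(c : 'I_k) \sum_(d in predC1 c) - cross_edges c d = - (2 * (num_edges e)%:R).
  rewrite -sum_cross_edges -sumrN; apply: eq_bigr => c _.
  rewrite [in RHS](bigD1 c) //= cross_edges_same add0r sumrN.
  by congr (- _); apply: eq_bigl => d; rewrite inE.
have binE : ('C(k, 2) * 2 = k * k.-1)%N.
  by rewrite -[X in (_ * X)%N]/(2`!) bin_ffact ffactnS ffactn1.
by move: sum_le; rewrite lhsE rhsE -binE natrM; nra.
Qed.

End ColourClasses.

Lemma theta_ge0 (R : realType) n (e : rel 'I_n) : 0 <= theta R e.
Proof. by rewrite /theta le_min ler0n divr_ge0 ?ler0n. Qed.

Lemma ler_Ndiv_of_mul (F : realFieldType) (x a b : F) :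
  0 <= b -> 0 < a -> x * b <= - a -> x <= - a / b.
Proof.
move=> b_ge0 a_gt0 le_xb; have b_gt0 : 0 < b.
  by rewrite lt_def b_ge0 andbT; apply: contraTneq le_xb => ->; rewrite mulr0 oppr_ge0 -ltNge.
by rewrite ler_pdivlMr.
Qed.

Theorem theorem2p8 (R : realType) (n : nat) (e : rel 'I_n) (mu : R) :
  simple_graph e ->
  (0 < num_edges e)%N ->
  is_smallest_eigenvalue (adj_mx R e) mu ->
  mu <= - (num_edges e)%:R /
          (('C(chromatic_number e, 2))%:R * theta R e).
Proof.
move=> [e_irr e_sym] edges_gt0 [_ mu_min].
have /colorableP [f f_proper] := colorable_chromatic_number e_irr.
have [i _] : exists i : 'I_n, true.
  by move: edges_gt0; rewrite card_gt0 => /set0Pn [[i _] _]; exists i.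
have mu_le0 : mu <= 0.
  by rewrite -(adj_mx_diag R i e_irr); apply: min_eigenvalue_le_diag (adj_mx_tr R e_sym) mu_min.
apply: ler_Ndiv_of_mul; rewrite ?mulr_ge0 ?theta_ge0 ?ltr0n //.
by have := colouring_bound e_irr e_sym f_proper mu_min mu_le0.
Qed.
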